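(* Let $v\in\Sigma^*$, let $u$ be a $v$-minimal word, $i\in\mathrm{supp}(u)$, and $r_i=\mathrm{Rnk}(\mathcal{I}_i)$. Then there is a word $w_i\in\Sigma^*$ with $|w_i|\le n_iD(2,r_i,n)$ such that $\theta_i(w_i)=\sum_{j=1}^m h_jt_j$ for some $m$, some elements $h_j\in\mathbb{M}_{n_i}(\mathbb{C})$ and some $t_j\in\mathcal{I}_i$ with $t_j\sim_i 0_i$ for all $j\in[1,m]$.
   Context: Let $\mathcal{A}=\langle Q,\Sigma,\delta\rangle$ be a synchronizing automaton with $n=|Q|$ states $q_1,\dots,q_n$; write $q\cdot u$ for the action of $u\in\Sigma^*$ (extended to subsets) and $\mathrm{rk}(u)=|Q\cdot u|$. Each word acts linearly on $\mathbb{C}Q$ by $q\mapsto q\cdot u$, preserving $w^\perp=\{x:\langle x,q_1+\dots+q_n\rangle=0\}$; let $\rho:\Sigma^*\to\mathbb{M}_{n-1}(\mathbb{C})$ be the induced representation and $\mathcal{R}$ the $\mathbb{C}$-algebra generated by $\rho(\Sigma^* )$. Write $\mathcal{R}/\mathrm{Rad}(\mathcal{R})\cong\prod_{i=1}^k\mathbb{M}_{n_i}(\mathbb{C})$ (Jacobson radical, Wedderburn–Artin) and let $\theta_i:\Sigma^*\to\mathbb{M}_{n_i}(\mathbb{C})$ be $\rho$ followed by the quotient map and the $i$-th projection; $0_i$ is the zero matrix. The monoid $\theta_i(\Sigma^* )$ has a unique $0$-minimal ideal $\mathcal{I}_i$; $\mathrm{Rnk}(\mathcal{I}_i)=\min\{\mathrm{rk}(x):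 \theta_i(x)\in\mathcal{I}_i\setminus\{0_i\}\}$. The support of a word $z$ is $\mathrm{supp}(z)=\{i:\theta_i(z)\neq0_i\}$. For $v\in\Sigma^*$, a word $u\in\Sigma^*v\Sigma^*$ is $v$-minimal if $\mathrm{supp}(u)\neq\emptyset$ and there is no $z\in\Sigma^*v\Sigma^*$ with $\emptyset\neq\mathrm{supp}(z)\subsetneq\mathrm{supp}(u)$. For such $u$, $i\in\mathrm{supp}(u)$ and $g\in\mathcal{I}_i$, a word $w$ $u$-represents $g$ if $w\in\Sigma^*u\Sigma^*$, $\theta_i(w)=g$, and either $g=0_i$ or $\mathrm{rk}(w)$ is minimum among all words $w'\in\Sigma^*u\Sigma^*$ with $\theta_i(w')=g$. Define $\sigma_i$ on $\mathcal{I}_i$ by $g\,\sigma_i\,f$ iff $g=f$ or there exist words $w_1,w_2$ that $u$-represent $g$ and $f$ respectively with $|Q\cdot w_1\cap Q\cdot w_2|>1$; let $\sim_i$ be the transitive closure of $\sigma_i$. $D(2,r,n)$ denotes the maximum size of a family of $r$-element subsets of $[1,n]$ in which every $2$-element subset is contained in at most one member. *)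

From mathcomp Require Import all_boot all_order all_algebra.
From mathcomp Require Import reals complex.
From Stdlib Require Import Relations.

Set Implicit Arguments.
Unset Strict Implicit.
Unset Printing Implicit Defensive.

Import GRing.Theory.
Local Open Scope ring_scope.

Section Automaton.

(* The last state ord_max plays the role of q_n
   of the paper; rho is taken w.r.t. the basis (q_j - q_last), j < n, of w^perp. *)
Variables (Sigma : finType) (n : nat) (delta : 'I_n.+1 -> Sigma -> 'I_n.+1).

Definition act (q : 'I_n.+1) (u : seq Sigma) : 'I_n.+1 := foldl delta q u.

Definition image (u : seq Sigma) : {set 'I_n.+1} := [set act q u | q : 'I_n.+1].

Definition rk (u : seq Sigma) : nat := #|image u|.

Definition synchronizing : Prop := exists u : seq Sigma, rk u = 1%N.

Definition in_ideal_word (v u : seq Sigma) : Prop :=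
  exists x y : seq Sigma, u = x ++ v ++ y.

Variable C : fieldType.

Definition widenQ (j : 'I_n) : 'I_n.+1 := widen_ord (leqnSn n) j.

(* Matrix (acting on row vectors) of the action of u on w^perp, in the basis
   e_j = q_j - q_last (j < n):  e_i . u = q_{i.u} - q_{last.u}. *)
Definition rho (u : seq Sigma) : 'M[C]_n :=
  \matrix_(i, j) ((act (widenQ i) u == widenQ j)%:R - (act ord_max u == widenQ j)%:R).

Inductive in_alg : 'M[C]_n -> Prop :=
| in_alg_gen u : in_alg (rho u)
| in_alg_0 : in_alg 0
| in_alg_add A B : in_alg A -> in_alg B -> in_alg (A + B)
| in_alg_scale (c : C) A : in_alg A -> in_alg (c *: A)
| in_alg_mul A B : in_alg A -> in_alg B -> in_alg (A *m B).

(* Jacobson radical of the (unital, identity = rho [::] = 1) algebra: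
   x such that 1 - y x is left invertible in the algebra for every y. *)
Definition in_rad (A : 'M[C]_n) : Prop :=
  in_alg A /\
  forall B, in_alg B -> exists Z, in_alg Z /\ Z *m (1%:M - B *m A) = 1%:M.

(* Wedderburn--Artin data: pi i is (quotient by Rad followed by the i-th
   projection of an isomorphism R/Rad(R) ~= prod_i M_{nn i}(C)), i.e.
   the family (pi i)_i restricted to R is a unital algebra morphism
   R -> prod_i M_{nn i}(C) which is surjective with kernel Rad(R). *)
Definition wedderburn_data (k : nat) (nn : 'I_k -> nat)
  (pi : forall i : 'I_k, 'M[C]_n -> 'M[C]_(nn i)) : Prop :=
  [/\ (forall i, (0 < nn i)%N),
      ((forall i A B, in_alg A -> in_alg B ->
         pi i (A + B) = pi i A + pi i B /\ pi i (A *m B) = pi i A *m pi i B) /\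
       (forall i (c : C) A, in_alg A -> pi i (c *: A) = c *: pi i A)),
      (forall i, pi i 1%:M = 1%:M),
      (forall g : forall i, 'M[C]_(nn i),
         exists A, in_alg A /\ forall i, pi i A = g i)
    & (forall A, in_alg A -> ((forall i, pi i A = 0) <-> in_rad A))].

Section Theta.
Variables (k : nat) (nn : 'I_k -> nat) (pi : forall i : 'I_k, 'M[C]_n -> 'M[C]_(nn i)).

Definition theta (i : 'I_k) (u : seq Sigma) : 'M[C]_(nn i) := pi i (rho u).

Definition in_monoid (i : 'I_k) (g : 'M[C]_(nn i)) : Prop := exists x, theta i x = g.

Definition is_monoid_ideal (i : 'I_k) (J : 'M[C]_(nn i) -> Prop) : Prop :=
  [/\ (forall g, J g -> @in_monoid i g),
      (exists g, J g)
    & (forall a g b, @in_monoid i a -> J g -> @in_monoid i b -> J (a *m g *m b))].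

Definition zero_minimal_ideal (i : 'I_k) (I : 'M[C]_(nn i) -> Prop) : Prop :=
  [/\ @is_monoid_ideal i I,
      (exists g, I g /\ g <> 0)
    & (forall J, @is_monoid_ideal i J -> (forall g, J g -> I g) ->
         (forall g, J g -> g = 0) \/ (forall g, I g -> J g))].

Definition is_Rnk (i : 'I_k) (I : 'M[C]_(nn i) -> Prop) (r : nat) : Prop :=
  (exists x, [/\ I (theta i x), theta i x <> 0 & rk x = r]) /\
  (forall x, I (theta i x) -> theta i x <> 0 -> (r <= rk x)%N).

Definition supp (z : seq Sigma) : {set 'I_k} := [set i | theta i z != 0].

Definition v_minimal (v u : seq Sigma) : Prop :=
  [/\ in_ideal_word v u, supp u != set0
    & ~ (exists z, [/\ in_ideal_word v z, supp z != set0 & supp z \proper supp u])].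

Definition u_represents (u : seq Sigma) (i : 'I_k) (I : 'M[C]_(nn i) -> Prop)
  (g : 'M[C]_(nn i)) (w : seq Sigma) : Prop :=
  [/\ I g, in_ideal_word u w, theta i w = g
    & g = 0 \/ (forall w', in_ideal_word u w' -> theta i w' = g -> (rk w <= rk w')%N)].

Definition sigma_rel (u : seq Sigma) (i : 'I_k) (I : 'M[C]_(nn i) -> Prop)
  (g f : 'M[C]_(nn i)) : Prop :=
  [/\ I g, I f &
      g = f \/ exists w1 w2, [/\ u_represents u I g w1, u_represents u I f w2
                              & (1 < #|image w1 :&: image w2|)%N]].

Definition sim_rel (u : seq Sigma) (i : 'I_k) (I : 'M[C]_(nn i) -> Prop) :
  relation 'M[C]_(nn i) := clos_trans _ (sigma_rel u I).

End Theta.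
End Automaton.

Definition D2 (r N : nat) : nat :=
  \max_(F : {set {set 'I_N}} |
          [forall A in F, #|A| == r] &&
          [forall P : {set 'I_N}, (#|P| == 2%N) ==> (#|[set A in F | P \subset A]| <= 1)%N])
    #|F|.

From Pilot Require Import Defs.
From mathcomp Require Import all_boot all_order all_algebra.
From mathcomp Require Import reals complex zify.
From Stdlib Require Import Relations Classical IndefiniteDescription.

(* Let L be the set of sums [h_1 t_1 + ... + h_m t_m] with [t_j ~ 0]. Since
   [~] is compatible with right multiplication by theta(Sigma^* ), which spans
   the whole matrix algebra, L is a left ideal.  If some nonzero [t] of [I]
   satisfies [t ~ 0], sandwiching [t] between matrix units puts the identity
   theta(empty word) in L.  Otherwise the class of 0 is trivial, and for every
   nonzero [g] of [I] a shortest word [y] with [g theta(y) = 0] has length at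
   most D(2,r,n): the images of u-representatives of the prefixes
   [g theta(y_1...y_j)] are r-sets, and if two of them shared two states the
   two prefixes would be sigma-related, so that appending the rest of [y] to
   the shorter one would give a shorter killing word.  As the algebra is
   prime, every nonzero theta(w) has such a [g] in its row space, so each
   such [y] lowers the rank of theta(w), and n_i steps give theta(w) = 0. *)

Set Implicit Arguments.
Unset Strict Implicit.
Unset Printing Implicit Defensive.
Import GRing.Theory.
Local Open Scope ring_scope.

Lemma mulmx_delta_mxE (R : pzRingType) m n p q (A : 'M[R]_(m, n)) (B : 'M[R]_(p, q))
    i b c e :
  (A *m delta_mx b c *m B) i e = A i b * B c e.
Proof.
rewrite !mxE (bigD1 c) //= big1 ?addr0 => [|d /negPf dc]; last first.
  by rewrite mxE big1 ?mul0r // => x _; rewrite mxE dc andbF mulr0.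
rewrite mxE (bigD1 b) //= big1 ?addr0 => [|x /negPf xb]; last by rewrite mxE xb mulr0.
by rewrite mxE !eqxx mulr1.
Qed.

Lemma delta_mx_sandwich (R : pzRingType) m n p (A : 'M[R]_(m, n)) (i j : 'I_p) a b :
  delta_mx i a *m A *m delta_mx b j = A a b *: delta_mx i j.
Proof.
apply/matrixP => x y.
rewrite -[_ *m delta_mx b j]mulmx1 mulmx_delta_mxE.
rewrite -[delta_mx i a]mul1mx mulmx_delta_mxE !mxE [j == y]eq_sym.
by case: (x == i); case: (y == j); rewrite ?mul1r ?mulr1 ?mul0r ?mulr0.
Qed.

Lemma mxrank_mul_ltn (F : fieldType) m n p q (A : 'M[F]_(m, n)) (B : 'M[F]_(n, p))
    (G : 'M[F]_(q, n)) :
  G != 0 -> (G <= A)%MS -> G *m B = 0 -> (\rank (A *m B) < \rank A)%N.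
Proof.
move=> G0 GA GB; rewrite -(mxrank_mul_ker A B) -[X in (X < _)%N]addn0 ltn_add2l.
rewrite lt0n mxrank_eq0; apply: contra G0 => /eqP AkerB0.
by rewrite -submx0 -AkerB0 sub_capmx GA sub_kermx GB /=.
Qed.

Lemma ex_minimal_size (T : Type) (P : seq T -> Prop) :
  (exists s, P s) -> exists s, P s /\ forall s', (size s' < size s)%N -> ~ P s'.
Proof.
case=> s Ps; move: {2}(size s).+1 (ltnSn (size s)) => N.
elim: N s Ps => // N IH s Ps sN.
have [[s' [lt_s's Ps']] | none] := classic (exists s', (size s' < size s)%N /\ P s').
  exact: IH Ps' (leq_trans lt_s's sN).
by exists s; split=> // s' lt_s's Ps'; apply: none; exists s'.
Qed.

Lemma packing_le_D2 (N r m : nat) (A : 'I_m -> {set 'I_N}) :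
  (1 < r)%N -> (forall j, #|A j| = r) ->
  (forall j j', j != j' -> #|A j :&: A j'| <= 1)%N ->
  (m <= D2 r N)%N.
Proof.
move=> r_gt1 cardA meetA.
have A_inj : injective A.
  move=> j j' Ajj'; apply/eqP; apply: contraT => /meetA.
  by rewrite Ajj' setIid cardA leqNgt r_gt1.
rewrite -[m]card_ord -(card_imset _ A_inj).
apply: (leq_bigmax_cond (F := fun F : {set {set 'I_N}} => #|F|)).
apply/andP; split; first by apply/forall_inP => _ /imsetP [j _ ->]; rewrite cardA.
apply/forallP => P; apply/implyP => /eqP cardP.
apply/card_le1_eqP => B B'; rewrite !inE.
move=> /andP [/imsetP [j _ ->] PAj] /andP [/imsetP [j' _ ->] PAj'].
have [-> // | jj'] := eqVneq j j'.
have := meetA j j' jj'; rewrite leqNgt => /negP []; rewrite -cardP.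
by apply: subset_leq_card; rewrite subsetI PAj PAj'.
Qed.

Section Words.
Variables (Sigma : finType) (n : nat) (delta : 'I_n.+1 -> Sigma -> 'I_n.+1).
Variable C : fieldType.

Lemma act_cat q a b : act delta q (a ++ b) = act delta (act delta q a) b.
Proof. by rewrite /act foldl_cat. Qed.

Lemma image_cat a b :
  Defs.image delta (a ++ b) = [set act delta q b | q in Defs.image delta a].
Proof. by rewrite /Defs.image -imset_comp; apply: eq_imset => q /=; rewrite act_cat. Qed.

Lemma rk_catl a b : (rk delta (a ++ b) <= rk delta a)%N.
Proof. by rewrite /rk image_cat leq_imset_card. Qed.

Lemma rk_catr a b : (rk delta (a ++ b) <= rk delta b)%N.
Proof.
apply: subset_leq_card; apply/subsetP => _ /imsetP [q _ ->].
by rewrite act_cat imset_f.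
Qed.

Lemma widenQ_eq_max (j : 'I_n) : (widenQ j == ord_max) = false.
Proof. by rewrite -val_eqE /= ltn_eqF. Qed.

Lemma sum_widenQ (q : 'I_n.+1) (F : 'I_n.+1 -> C) : F ord_max = 0 ->
  \sum_(j < n) (q == widenQ j)%:R * F (widenQ j) = F q.
Proof.
move=> F0; have -> : F q = \sum_(j < n.+1) (q == j)%:R * F j.
  rewrite (bigD1 q) //= eqxx mul1r big1 ?addr0 // => j /negPf jq.
  by rewrite eq_sym jq mul0r.
by rewrite big_ord_recr /= F0 mulr0 addr0.
Qed.

Lemma rho_cat a b : rho delta C (a ++ b) = rho delta C a *m rho delta C b.
Proof.
apply/matrixP => i j; rewrite !mxE.
pose F q : C := (act delta q b == widenQ j)%:R - (act delta ord_max b == widenQ j)%:R.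
have sumF q : \sum_(k < n) (q == widenQ k)%:R * rho delta C b k j = F q.
  by rewrite -(@sum_widenQ q F) ?/F ?subrr //; apply: eq_bigr => k _; rewrite mxE.
under eq_bigr => k _ do rewrite mxE mulrBl.
by rewrite sumrB !sumF /F !act_cat opprB addrA subrK.
Qed.

Lemma rho_nil : rho delta C [::] = 1%:M.
Proof.
apply/matrixP => i j; rewrite !mxE /act /= [ord_max == _]eq_sym widenQ_eq_max subr0.
by rewrite -val_eqE.
Qed.

Lemma rho_rk_le1 w : (rk delta w <= 1)%N -> rho delta C w = 0.
Proof.
move=> /card_le1_eqP rk_w; apply/matrixP => i j; rewrite !mxE.
by rewrite (rk_w (act delta (widenQ i) w) (act delta ord_max w)) ?imset_f ?subrr.
Qed.

End Words.

Section Representation.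
Variables (Sigma : finType) (n : nat) (delta : 'I_n.+1 -> Sigma -> 'I_n.+1).
Variables (C : fieldType) (k : nat) (nn : 'I_k -> nat).
Variables (pi : forall l : 'I_k, 'M[C]_n -> 'M[C]_(nn l)) (l : 'I_k).
Hypothesis wedderburn : wedderburn_data delta pi.

Local Notation th := (theta delta pi l).
Local Notation alg := (Defs.in_alg delta).
Local Notation M := 'M[C]_(nn l).

Lemma piD A B : alg A -> alg B -> pi l (A + B) = pi l A + pi l B.
Proof. by case: wedderburn => _ [pi_morph _] _ _ _ /pi_morph/[apply] /(_ l) []. Qed.

Lemma piM A B : alg A -> alg B -> pi l (A *m B) = pi l A *m pi l B.
Proof. by case: wedderburn => _ [pi_morph _] _ _ _ /pi_morph/[apply] /(_ l) []. Qed.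

Lemma piZ c A : alg A -> pi l (c *: A) = c *: pi l A.
Proof. by case: wedderburn => _ [_ pi_scale] _ _ _; apply: pi_scale. Qed.

Lemma pi0 : pi l 0 = 0.
Proof.
apply: (@addrI _ (pi l 0)); rewrite -piD ?addr0 //; exact: in_alg_0.
Qed.

Lemma theta_cat a b : th (a ++ b) = th a *m th b.
Proof. by rewrite /theta rho_cat piM //; apply: in_alg_gen. Qed.

Lemma theta_nil : th [::] = 1%:M.
Proof. by rewrite /theta rho_nil; case: wedderburn. Qed.

Lemma theta_rk_le1 w : (rk delta w <= 1)%N -> th w = 0.
Proof. by move=> rk_w; rewrite /theta rho_rk_le1 // pi0. Qed.

Lemma theta_sync : synchronizing delta -> exists z, th z = 0.
Proof. by case=> z rk_z; exists z; rewrite theta_rk_le1 ?rk_z. Qed.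

Definition theta_span (X : M) : Prop :=
  exists s : seq (C * seq Sigma), X = \sum_(p <- s) p.1 *: th p.2.

Lemma theta_span_pi (X : 'M[C]_n) : alg X -> theta_span (pi l X).
Proof.
elim=> [w | | A B algA [s1 e1] algB [s2 e2] | c A algA [s e] |
          A B algA [s1 e1] algB [s2 e2]].
- by exists [:: (1, w)]; rewrite big_seq1 scale1r.
- by exists [::]; rewrite big_nil pi0.
- by exists (s1 ++ s2); rewrite big_cat piD // e1 e2.
- exists [seq (c * p.1, p.2) | p <- s]; rewrite big_map piZ // e scaler_sumr.
  by apply: eq_bigr => p _; rewrite scalerA.
- exists [seq (p.1 * q.1, p.2 ++ q.2) | p <- s1, q <- s2].
  rewrite big_allpairs_dep piM // e1 e2 mulmx_suml; apply: eq_bigr => p _.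
  rewrite mulmx_sumr; apply: eq_bigr => q _ /=.
  by rewrite theta_cat -scalemxAl -scalemxAr scalerA.
Qed.

Lemma theta_spanT X : theta_span X.
Proof.
case: wedderburn => _ _ _ pi_onto _.
pose g j : 'M[C]_(nn j) := if l =P j is ReflectT e then ecast j 'M[C]_(nn j) e X else 0.
have [A [algA piA]] := pi_onto g.
suff -> : X = pi l A by apply: theta_span_pi.
by rewrite piA /g; case: eqP => // e; rewrite (eq_irrelevance e erefl).
Qed.

(* [th] spans [M], and a full matrix algebra is prime. *)
Lemma theta_prime (X Y : M) : X != 0 -> Y != 0 -> exists z, X *m th z *m Y != 0.
Proof.
move=> /matrix0Pn [a [b Xab]] /matrix0Pn [c [e Yce]].
apply: NNPP => all0; suff : X *m delta_mx b c *m Y = 0.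
  by move/matrixP/(_ a e); rewrite mulmx_delta_mxE mxE; apply/eqP; rewrite mulf_neq0.
have [s ->] := theta_spanT (delta_mx b c).
rewrite mulmx_sumr mulmx_suml big1 // => p _.
rewrite -scalemxAr -scalemxAl; apply/eqP; rewrite scaler_eq0; apply/orP; right.
by apply: contraT => ne0; case: all0; exists p.2.
Qed.


Section Ideal.
Variables (u : seq Sigma) (I : M -> Prop) (r : nat).
Hypotheses (I_min : zero_minimal_ideal delta pi I) (I_Rnk : is_Rnk delta pi I r).
Hypothesis theta_u_neq0 : th u != 0.

Local Notation represents := (u_represents delta pi u I).
Local Notation sim := (sim_rel delta pi u I).

Lemma ideal_theta_mul g a b : I g -> I (th a *m g *m th b).
Proof. by case: I_min => -[_ _ I_mul] _ _ Ig; apply: I_mul => //; [exists a | exists b]. Qed.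

Lemma ideal_theta_mulr g y : I g -> I (g *m th y).
Proof. by move/(ideal_theta_mul [::] y); rewrite theta_nil mul1mx. Qed.

Lemma Rnk_le_rk w : I (th w) -> th w != 0 -> (r <= rk delta w)%N.
Proof. by case: I_Rnk => _ Rnk_min Iw /eqP; apply: Rnk_min. Qed.

Lemma Rnk_gt1 : (1 < r)%N.
Proof.
case: I_Rnk => -[x [_ th_x0 rk_x]] _; rewrite ltnNge -rk_x.
by apply: contra_notN th_x0 => /theta_rk_le1.
Qed.

(* The monoid ideal generated by [th (u ++ z ++ x)], for [x] of rank [r] and
   [z] given by primeness, is nonzero, hence equal to [I] by 0-minimality. *)
Lemma ideal_word_rk_le_Rnk f : I f -> f != 0 ->
  exists w, [/\ in_ideal_word u w, th w = f & (rk delta w <= r)%N].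
Proof.
move=> If f0; case: I_Rnk => -[x [Ix /eqP th_x0 rk_x]] _.
have [z uzx0] := theta_prime theta_u_neq0 th_x0.
pose uzx := u ++ z ++ x.
have th_uzx : th uzx = th u *m th z *m th x by rewrite !theta_cat mulmxA.
pose J g := exists a b, g = th a *m th uzx *m th b.
have JI g : J g -> I g.
  case=> a [b ->]; apply: ideal_theta_mul.
  rewrite th_uzx -theta_cat.
  by have := ideal_theta_mul (u ++ z) [::] Ix; rewrite theta_nil mulmx1.
have J_ideal : is_monoid_ideal delta pi J.
  split.
  - by move=> _ [a [b ->]]; exists (a ++ uzx ++ b); rewrite !theta_cat mulmxA.
  - by exists (th [::] *m th uzx *m th [::]), [::], [::].
  - move=> _ g _ [a' <-] [a [b ->]] [b' <-].
    by exists (a' ++ a), (b ++ b'); rewrite !theta_cat !mulmxA.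
case: I_min => _ _ /(_ J J_ideal JI) [J0 | IJ].
  move: uzx0; rewrite -th_uzx (J0 (th uzx)) ?eqxx //.
  by exists [::], [::]; rewrite theta_nil mul1mx mulmx1.
have [a [b ->]] := IJ f If; exists (a ++ uzx ++ b); split.
- by exists a, (z ++ x ++ b); rewrite /uzx -!catA.
- by rewrite !theta_cat mulmxA.
- rewrite (leq_trans (rk_catr _ _ _)) // (leq_trans (rk_catl _ _ _)) // -rk_x.
  exact: leq_trans (rk_catr _ _ _) (rk_catr _ _ _).
Qed.

Lemma represents_exists g : I g -> g != 0 -> exists w, represents g w.
Proof.
move=> Ig g0; have [w [uw th_w rk_w]] := ideal_word_rk_le_Rnk Ig g0.
exists w; split=> //; right=> w' _ th_w'.
by rewrite (leq_trans rk_w) //; apply: Rnk_le_rk; rewrite th_w'.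
Qed.

Lemma represents_rk g w : represents g w -> g != 0 -> rk delta w = r.
Proof.
case=> Ig _ th_w [/eqP -> // | w_min] g0.
apply/anti_leq/andP; split; last by apply: Rnk_le_rk; rewrite th_w.
have [w' [uw' th_w' rk_w']] := ideal_word_rk_le_Rnk Ig g0.
exact: leq_trans (w_min w' uw' th_w') rk_w'.
Qed.

Lemma represents_cat g w y : represents g w -> represents (g *m th y) (w ++ y).
Proof.
move=> rep_w; have [Ig [a [b w_eq]] th_w _] := rep_w.
split.
- exact: ideal_theta_mulr.
- by exists a, (b ++ y); rewrite w_eq -!catA.
- by rewrite theta_cat th_w.
have [-> | gy0] := eqVneq (g *m th y) 0; [by left | right].
have g0 : g != 0 by apply: contraNneq gy0 => ->; rewrite mul0mx.
move=> w' _ th_w'; rewrite (leq_trans (rk_catl _ _ _)) // (represents_rk rep_w g0).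
by apply: Rnk_le_rk; rewrite th_w' //; exact: ideal_theta_mulr.
Qed.

Lemma represents_act_inj g w y : represents g w -> g *m th y != 0 ->
  {in Defs.image delta w &, injective (act delta ^~ y)}.
Proof.
move=> rep_w gy0; have g0 : g != 0 by apply: contraNneq gy0 => ->; rewrite mul0mx.
have [Ig _ th_w _] := rep_w.
have : (r <= rk delta (w ++ y))%N.
  by apply: Rnk_le_rk; rewrite theta_cat th_w //; exact: ideal_theta_mulr.
rewrite -(represents_rk rep_w g0) /rk image_cat => rk_wy.
by apply/imset_injP; rewrite eqn_leq leq_imset_card.
Qed.

Lemma sigma_rel_mulr g f y : sigma_rel delta pi u I g f ->
  sigma_rel delta pi u I (g *m th y) (f *m th y).
Proof.
case=> Ig If gf; split; try exact: ideal_theta_mulr.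
have [-> | gy_fy] := eqVneq (g *m th y) (f *m th y); [by left | right].
case: gf => [gf | [w1 [w2 [rep1 rep2 meet12]]]]; first by rewrite gf eqxx in gy_fy.
exists (w1 ++ y), (w2 ++ y); split; try exact: represents_cat.
have [p [q [p12 q12 pq]]] := card_gt1P meet12.
move: p12 q12; rewrite !inE => /andP [p1 p2] /andP [q1 q2].
have act_pq : act delta p y != act delta q y.
  apply: contra pq => /eqP pq_y; apply/eqP.
  have [gy0 | gy0] := eqVneq (g *m th y) 0.
  - apply: (represents_act_inj rep2 _ p2 q2 pq_y).
    by apply: contraNneq gy_fy => fy0; rewrite gy0 fy0.
  - exact: (represents_act_inj rep1 gy0 p1 q1 pq_y).
apply/card_gt1P; exists (act delta p y), (act delta q y).
by rewrite !inE !image_cat !imset_f.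
Qed.

Lemma sim_rel_mulr g f y : sim g f -> sim (g *m th y) (f *m th y).
Proof.
elim=> [{}g {}f gf | g1 g2 g3 _ sim12 _ sim23]; first by apply: t_step; apply: sigma_rel_mulr.
exact: t_trans sim12 sim23.
Qed.


Definition sim0_combination (X : M) : Prop := exists s : seq (M * M),
  (forall p, p \in s -> I p.2 /\ sim p.2 0) /\ X = \sum_(p <- s) p.1 *m p.2.

Lemma sim0_combination0 : sim0_combination 0.
Proof. by exists [::]; rewrite big_nil. Qed.

Lemma sim0_combinationD X Y :
  sim0_combination X -> sim0_combination Y -> sim0_combination (X + Y).
Proof.
move=> [s1 [s1_sim0 ->]] [s2 [s2_sim0 ->]]; exists (s1 ++ s2); rewrite big_cat.
by split=> // p; rewrite mem_cat => /orP [/s1_sim0 | /s2_sim0].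
Qed.

Lemma sim0_combination_mulmx h t : I t -> sim t 0 -> sim0_combination (h *m t).
Proof.
by move=> It t_sim0; exists [:: (h, t)]; rewrite big_seq1; split=> // p /[!inE] /eqP ->.
Qed.

(* [1 = sum_i (t a b)^-1 E_ia t E_bi], and each [E_bi] is a combination of
   [th z], while [t ~ 0] gives [t *m th z ~ 0]. *)
Lemma sim0_combination1 t : I t -> t != 0 -> sim t 0 -> sim0_combination 1%:M.
Proof.
move=> It /matrix0Pn [a [b tab]] t_sim0.
have -> : 1%:M = \sum_(i < nn l) (t a b)^-1 *: (delta_mx i a *m t *m delta_mx b i).
  rewrite mx1_sum_delta; apply: eq_bigr => i _.
  by rewrite delta_mx_sandwich scalerA mulVf // scale1r.
apply: (big_ind sim0_combination sim0_combination0 sim0_combinationD) => i _.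
have [s ->] := theta_spanT (delta_mx b i).
rewrite mulmx_sumr scaler_sumr.
apply: (big_ind sim0_combination sim0_combination0 sim0_combinationD) => p _.
rewrite -scalemxAr scalerA -mulmxA scalemxAl.
apply: sim0_combination_mulmx; first exact: ideal_theta_mulr.
by have := sim_rel_mulr p.2 t_sim0; rewrite mul0mx.
Qed.

Section Killing.
Hypothesis sync : synchronizing delta.
Hypothesis sim0_trivial : forall t, I t -> sim t 0 -> t = 0.

Lemma shortest_killing_word_le_D2 g y : I g -> g != 0 -> g *m th y = 0 ->
  (forall y', (size y' < size y)%N -> g *m th y' <> 0) -> (size y <= D2 r n.+1)%N.
Proof.
move=> Ig g0 gy0 y_min.
pose prefix (j : 'I_(size y)) := g *m th (take j y).
have prefix_I j : I (prefix j) by apply: ideal_theta_mulr.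
have prefix_neq0 j : prefix j != 0.
  by apply/eqP; apply: y_min; rewrite size_take ltn_ord.
have [W repW] : exists W : 'I_(size y) -> seq Sigma, forall j, represents (prefix j) (W j).
  apply: (functional_choice (fun j => represents (prefix j))) => j.
  exact: represents_exists.
apply: (packing_le_D2 (A := fun j => Defs.image delta (W j)) Rnk_gt1).
  by move=> j; apply: represents_rk (repW j) (prefix_neq0 j).
move=> j j' jj'; wlog lt_jj' : j j' jj' / (j < j')%N => [le_case | ].
  case: (ltngtP j j') => [lt_jj' | lt_j'j | /val_inj eq_jj'].
  - exact: le_case.
  - by rewrite setIC; apply: le_case; rewrite // eq_sym.
  - by rewrite eq_jj' eqxx in jj'.
rewrite leqNgt; apply/negP => meet2.
have sigma_jj' : sigma_rel delta pi u I (prefix j) (prefix j').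
  by split=> //; right; exists (W j), (W j').
have := sim_rel_mulr (drop j' y) (t_step _ _ _ _ sigma_jj').
rewrite /prefix -!mulmxA -!theta_cat cat_take_drop gy0 => sim0.
apply: (y_min (take j y ++ drop j' y)).
  by rewrite size_cat size_take size_drop ltn_ord; have := ltn_ord j'; lia.
by apply: sim0_trivial sim0; apply: ideal_theta_mulr.
Qed.

Lemma killing_word_le_D2 g : I g -> g != 0 ->
  exists y, (size y <= D2 r n.+1)%N /\ g *m th y = 0.
Proof.
move=> Ig g0; have [|y [gy0 y_min]] := ex_minimal_size (P := fun y => g *m th y = 0).
  by have [z th_z] := theta_sync sync; exists z; rewrite th_z mulmx0.
by exists y; split=> //; apply: shortest_killing_word_le_D2 Ig g0 gy0 y_min.
Qed.

(* Primeness puts a nonzero element [h th z th w] of [I] in the row space of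
   [th w]; a word killing it lowers the rank of [th w]. *)
Lemma theta_rank_drop w : th w != 0 ->
  exists y, (size y <= D2 r n.+1)%N /\ (\rank (th (w ++ y)) < \rank (th w))%N.
Proof.
move=> w0; case: I_min => _ [h [Ih /eqP h0]] _.
have [z hzw0] := theta_prime h0 w0.
have I_hzw : I (h *m th z *m th w) by rewrite -mulmxA -theta_cat; apply: ideal_theta_mulr.
have [y [size_y hzwy0]] := killing_word_le_D2 I_hzw hzw0.
exists y; split=> //; rewrite theta_cat.
exact: mxrank_mul_ltn hzw0 (submxMl _ _) hzwy0.
Qed.

Lemma theta_killing_word : exists w, (size w <= nn l * D2 r n.+1)%N /\ th w = 0.
Proof.
have iter j : exists w, (size w <= j * D2 r n.+1)%N /\ (\rank (th w) <= nn l - j)%N.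
  elim: j => [|j [w [size_w rank_w]]]; first by exists [::]; rewrite mul0n subn0 rank_leq_col.
  have [th_w0 | th_w_neq0] := eqVneq (th w) 0.
    exists w; rewrite th_w0 mxrank0; split=> //.
    by rewrite (leq_trans size_w) // leq_mul2r leqnSn orbT.
  have [y [size_y rank_wy]] := theta_rank_drop th_w_neq0.
  exists (w ++ y); split; first by rewrite size_cat mulSn addnC leq_add.
  lia.
have [w [size_w]] := iter (nn l).
by rewrite subnn leqn0 mxrank_eq0 => /eqP th_w0; exists w.
Qed.

End Killing.
End Ideal.
End Representation.

Theorem mainTheorem11 (R : realType) (Sigma : finType) (n : nat)
  (delta : 'I_n.+1 -> Sigma -> 'I_n.+1)
  (k : nat) (nn : 'I_k -> nat)
  (pi : forall l : 'I_k, 'M[R[i]]_n -> 'M[R[i]]_(nn l))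
  (v u : seq Sigma) (l : 'I_k) (I : 'M[R[i]]_(nn l) -> Prop) (r : nat) :
  synchronizing delta ->
  wedderburn_data delta pi ->
  v_minimal delta pi v u ->
  l \in supp delta pi u ->
  zero_minimal_ideal delta pi I ->
  is_Rnk delta pi I r ->
  exists w : seq Sigma,
    (size w <= nn l * D2 r n.+1)%N /\
    exists (m : nat) (h t : 'I_m -> 'M[R[i]]_(nn l)),
      (forall j, I (t j) /\ sim_rel delta pi u I (t j) 0) /\
      theta delta pi l w = \sum_(j < m) h j *m t j.
Proof.
move=> sync wedderburn _ l_supp I_min I_Rnk.
have th_u : theta delta pi l u != 0 by move: l_supp; rewrite inE.
have [[t [It t0 t_sim0]] | no_sim0] :=
  classic (exists t, [/\ I t, t != 0 & sim_rel delta pi u I t 0]).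
  have [s [s_sim0 s_sum]] := sim0_combination1 wedderburn I_min I_Rnk th_u It t0 t_sim0.
  exists [::]; split=> //.
  exists (size s), (fun j => (nth (0, 0) s j).1), (fun j => (nth (0, 0) s j).2).
  split; first by move=> j; apply: s_sim0; rewrite mem_nth.
  by rewrite theta_nil // s_sum (big_nth (0, 0)) big_mkord.
have sim0_trivial t : I t -> sim_rel delta pi u I t 0 -> t = 0.
  by move=> It t_sim0; apply/eqP; apply: contraT => t0; case: no_sim0; exists t.
have [w [size_w th_w]] := theta_killing_word wedderburn I_min I_Rnk th_u sync sim0_trivial.
exists w; split=> //; exists 0%N, (fun _ => 0), (fun _ => 0); split; first by case.
by rewrite th_w big_ord0.
Qed.
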